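(* Let $1\le k\le n-2$, let $X[k]$, $V_1$, $\overline{V_1}$ be as described below, and let $\mathcal{G}$ be the graph with vertex set $\overline{V_1}$ in which distinct $u,v$ are adjacent iff some $w\in V_1$ is adjacent in $X[k]$ to both $u$ and $v$. Then $\mathcal{G}$ is isomorphic to the partial permutation graph $P(k,n-1)$; moreover, for each $w\in V_1$, the neighbors of $w$ in $\overline{V_1}$ form a maximal clique of $\mathcal{G}$ of size $n-k$.
   Context: $T_n=\{(1\,2),\dots,(1\,n)\}$. $X[k]$ is the multigraph whose vertices are the $k$-tuples of pairwise distinct elements of $[n]$, with, for each vertex $(i_1,\dots,i_k)$ and each $t\in T_n$, an edge joining it to $(t(i_1),\dots,t(i_k))$ (a loop if equal). $V_1$ is the set of vertices having $1$ as an entry, $\overline{V_1}$ the rest. For integers $1\le d\le m$, the partial permutation graph $P(d,m)$ has as vertices all $d$-tuples with pairwise distinct entries from $[m]$ (here identified with $\{2,\dots,n\}$ when $m=n-1$), two adjacent iff they differ in exactly one coordinate. *)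

From HB Require Import structures.
From mathcomp Require Import all_boot.
Set Implicit Arguments. Unset Strict Implicit. Unset Printing Implicit Defensive.

(* Convention: [n] = {1,...,n} is represented by 'I_n = {0,...,n-1}, the
   element i+1 of [n] being represented by i.  In particular the distinguished
   element 1 of [n] is represented by 0. *)

(* Vertices of X[k] (and of partial permutation graphs): k-tuples of pairwise
   distinct elements of 'I_n. *)
Definition Vtx (n k : nat) := {t : k.-tuple 'I_n | uniq t}.

(* the transposition (1 (i+1)) acting on 0-indexed values *)
Definition tr1 (i x : nat) : nat := if x == 0 then i else if x == i then 0 else x.

(* u --- w is an edge of X[k]: w = t(u) for some t = (1 j) in T_n, j = 2..n
   (0-indexed: i = j-1 ranging over 1..n-1). *)
Definition Xadj (n k : nat) (u w : Vtx n k) : bool :=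
  [exists i : 'I_n, (0 < val i) &&
     (map (tr1 (val i)) (map val (val (val u))) == map val (val (val w)))].

Definition V1 (n k : nat) : {set Vtx n k} :=
  [set u : Vtx n k | 0 \in map val (val (val u))].

Definition V1bar (n k : nat) := {u : Vtx n k | u \notin V1 n k}.

Definition Gadj (n k : nat) (u v : V1bar n k) : bool :=
  (u != v) &&
  [exists w : Vtx n k, [&& w \in V1 n k, Xadj w (val u) & Xadj w (val v)]].

Definition Padj (d m : nat) (s t : Vtx m d) : bool :=
  #|[set j : 'I_d | tnth (val s) j != tnth (val t) j]| == 1.

Definition is_clique (T : finType) (adj : rel T) (S : {set T}) : Prop :=
  forall x y, x \in S -> y \in S -> x != y -> adj x y.

Definition is_maximal_clique (T : finType) (adj : rel T) (S : {set T}) : Prop :=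
  is_clique adj S /\
  forall S' : {set T}, is_clique adj S' -> S \subset S' -> S' = S.

Definition graph_iso (T1 T2 : finType) (adj1 : rel T1) (adj2 : rel T2) : Prop :=
  exists f : T1 -> T2, bijective f /\ forall x y, adj1 x y = adj2 (f x) (f y).

From HB Require Import structures.
From mathcomp Require Import all_boot.
From mathcomp Require Import zify.
Set Implicit Arguments. Unset Strict Implicit. Unset Printing Implicit Defensive.

(* Everything is phrased through one relation on vertices of X[k]:
   [agree u v j] says that u and v coincide in every coordinate except
   possibly the j-th.
   - If w has the entry 0 in coordinate j0 and u avoids 0, then
     w --- u in X[k] iff [agree w u j0]: the transposition (0 i) can only
     move the entry 0, and must send it to the new entry u_j0.
   - Hence two vertices of \bar{V_1} are adjacent in G iff they are distinct
     and agree outside one coordinate (a common neighbour is obtained by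
     writing 0 in that coordinate).  Subtracting 1 from every entry maps
     \bar{V_1} bijectively onto the k-tuples over {0,...,n-2} and preserves
     this relation, which is adjacency in P(k,n-1).
   - The neighbours of w in \bar{V_1} are the vertices agreeing with w
     outside j0; their j0-th entry ranges over the n-k values missing from w.
     They form a clique (w is a common neighbour), and a vertex adjacent to
     two of them a, b while agreeing with neither outside j0 would force
     a_j0 = b_j0, i.e. a = b; so the clique is maximal. *)

Definition coord n k (u : Vtx n k) (j : 'I_k) : 'I_n := tnth (val u) j.

Definition agree n k (u v : Vtx n k) (j : 'I_k) : Prop :=
  forall p, p != j -> coord u p = coord v p.

Definition nbhd n k (w : Vtx n k) : {set V1bar n k} :=
  [set u : V1bar n k | Xadj w (val u)].

Lemma eq_map_tuple k (T U : Type) (f g : T -> U) (t s : k.-tuple T) :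
  map f t = map g s <-> forall j, f (tnth t j) = g (tnth s j).
Proof.
split=> [e j | e].
  have et : map_tuple f t = map_tuple g s by apply: val_inj.
  by have := congr1 (fun x => tnth x j) et; rewrite !tnth_map.
have eqt : map_tuple f t = map_tuple g s.
  by apply: eq_from_tnth => j; rewrite !tnth_map.
exact: (congr1 (@tval k U) eqt).
Qed.

Section Agreement.
Variables n k : nat.
Implicit Types u v w : Vtx n k.

Lemma coord_inj u : injective (coord u).
Proof. exact/tuple_uniqP/(valP u). Qed.

Lemma coord_zero_unique w p q :
  val (coord w p) = 0 -> val (coord w q) = 0 -> p = q.
Proof.
by move=> p0 q0; apply: (@coord_inj w); apply: val_inj; rewrite p0 q0.
Qed.

Lemma agree_sym u v j : agree u v j -> agree v u j.
Proof. by move=> a p pj; rewrite (a p pj). Qed.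

Lemma agree_trans u v w j : agree u v j -> agree v w j -> agree u w j.
Proof. by move=> a b p pj; rewrite (a p pj) (b p pj). Qed.

Lemma agree_eq u v j : agree u v j -> coord u j = coord v j -> u = v.
Proof.
move=> a e; apply/val_inj/eq_from_tnth => p.
by case: (eqVneq p j) => [-> | /a].
Qed.

Lemma exists_replace u (j : 'I_k) (x : 'I_n) :
  (forall p, p != j -> coord u p != x) ->
  exists v, coord v j = x /\ agree u v j.
Proof.
move=> fresh; pose F p := if p == j then x else coord u p.
have F_inj : injective F.
  move=> p q; rewrite /F.
  case: (eqVneq p j) => [-> | pj]; case: (eqVneq q j) => [-> | qj] //.
  - by move=> e; move: (fresh q qj); rewrite -e eqxx.
  - by move=> e; move: (fresh p pj); rewrite e eqxx.
  - exact: coord_inj.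
have uniqF : uniq [tuple F p | p < k] by rewrite map_inj_uniq ?enum_uniq.
exists (exist (fun t : k.-tuple 'I_n => uniq t) _ uniqF).
by split=> [| p pj]; rewrite /coord /= tnth_mktuple /F ?eqxx // (negbTE pj).
Qed.

Lemma PadjP u v : reflect (u != v /\ exists j, agree u v j) (Padj u v).
Proof.
apply: (iffP cards1P) => [[j D] | [neq [j a]]].
  have inD p : (coord u p != coord v p) = (p == j).
    by rewrite -[p == j]in_set1 -D inE.
  split; last by exists j => p pj; apply/eqP; rewrite -[_ == _]negbK inD.
  by apply: contraTneq (eqxx j) => uv; rewrite -inD uv eqxx.
exists j; apply/setP => p; rewrite !inE.
case: (eqVneq p j) => [-> | pj] /=.
  by apply: contra neq => /eqP e; apply/eqP/(agree_eq a e).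
by rewrite -!/(coord _ p) (a p pj) eqxx.
Qed.

Lemma V1P u : reflect (exists j, val (coord u j) = 0) (u \in V1 n k).
Proof.
rewrite inE; apply: (iffP mapP) => [[x /tnthP [j ->] x0] | [j u0]].
  by exists j; rewrite -x0.
by exists (coord u j); [exact: mem_tnth | rewrite u0].
Qed.

Lemma entry_nonzero u (x : 'I_n) :
  u \notin V1 n k -> x \in val u -> val x != 0.
Proof.
move=> uV /tnthP [j ->]; apply: contra uV => /eqP u0.
by apply/V1P; exists j.
Qed.

Lemma coord_nonzero u j : u \notin V1 n k -> val (coord u j) != 0.
Proof. by move=> uV; apply: entry_nonzero uV (mem_tnth j (val u)). Qed.

Lemma XadjP w u j0 : val (coord w j0) = 0 -> u \notin V1 n k ->
  reflect (agree w u j0) (Xadj w u).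
Proof.
move=> wj0 uV; have u_nz p := coord_nonzero p uV.
apply: (iffP existsP) => [[i /andP [_]] | a].
  rewrite -map_comp => /eqP /eq_map_tuple e p pj.
  have wp_nz : val (coord w p) != 0.
    by apply: contra pj => /eqP wp0; rewrite (coord_zero_unique wp0 wj0).
  move: (e p); rewrite /= /tr1 (negbTE wp_nz).
  case: eqP => [_ u0 | _ /val_inj //].
  by move: (u_nz p); have -> : val (coord u p) = 0 by exact: esym u0.
exists (coord u j0); rewrite lt0n u_nz /= -map_comp.
apply/eqP/eq_map_tuple => p /=; rewrite /tr1.
case: (eqVneq p j0) => [-> | pj]; first by rewrite wj0 eqxx.
rewrite -[tnth _ p]/(coord w p) (a p pj) (negbTE (u_nz p)).
by rewrite (inj_eq val_inj) (inj_eq (@coord_inj u)) (negbTE pj).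
Qed.

Lemma GadjP (u v : V1bar n k) :
  reflect (u != v /\ exists j, agree (val u) (val v) j) (Gadj u v).
Proof.
apply: (iffP andP) => -[neq adj]; split => //.
  have [w /and3P [/V1P [j0 wj0] wu wv]] := existsP adj.
  move/(XadjP wj0 (valP u)): wu => awu; move/(XadjP wj0 (valP v)): wv => awv.
  by exists j0; apply: agree_trans (agree_sym awu) awv.
have [j a] := adj.
have n_gt0 : 0 < n := leq_ltn_trans (leq0n _) (ltn_ord (coord (val u) j)).
have fresh p : p != j -> coord (val u) p != Ordinal n_gt0.
  by move=> _; apply: contraNneq (coord_nonzero p (valP u)) => ->.
have [w [wj auw]] := exists_replace fresh.
have wj0 : val (coord w j) = 0 by rewrite wj.
apply/existsP; exists w; apply/and3P; split.
- by apply/V1P; exists j.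
- exact/(XadjP wj0 (valP u))/agree_sym.
- exact/(XadjP wj0 (valP v))/(agree_trans (agree_sym auw) a).
Qed.

End Agreement.

Section Neighbourhood.
Variables (n k : nat) (w : Vtx n k) (j0 : 'I_k).
Hypothesis wj0 : val (coord w j0) = 0.

Lemma nbhdP u : reflect (agree w (val u) j0) (u \in nbhd w).
Proof. by rewrite inE; apply: XadjP wj0 (valP u). Qed.

(* any two neighbours of w have w as a common neighbour in V_1 *)
Lemma nbhd_clique : is_clique (@Gadj n k) (nbhd w).
Proof.
move=> x y; rewrite !inE => wx wy xy; apply/andP; split => //.
by apply/existsP; exists w; rewrite wx wy !andbT; apply/V1P; exists j0.
Qed.

(* a neighbour of w is determined by its j0-th entry, which can be any
   value missing from w *)
Lemma nbhd_card : #|nbhd w| = n - k.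
Proof.
have entry_inj :
    {in nbhd w &, injective (fun u : V1bar n k => coord (val u) j0)}.
  move=> a b /nbhdP wa /nbhdP wb e.
  exact/val_inj/(agree_eq (agree_trans (agree_sym wa) wb)).
have image : [set coord (val u) j0 | u in nbhd w] = ~: [set x in val w].
  apply/setP => x; rewrite !inE; apply/imsetP/idP => [[u /nbhdP a ->] | xw].
    apply/tnthP => -[p up]; case: (eqVneq p j0) => [pj | pj].
      by move: (coord_nonzero j0 (valP u)); rewrite up -/(coord w p) pj wj0.
    move: up; rewrite -/(coord w p) (a p pj) => /coord_inj jp.
    by rewrite jp eqxx in pj.
  have fresh p : p != j0 -> coord w p != x.
    by move=> _; apply: contra xw => /eqP <-; exact: mem_tnth.
  have [v [vx a]] := exists_replace fresh.
  have vV : v \notin V1 n k.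
    apply/V1P => -[p]; case: (eqVneq p j0) => [-> | pj].
      rewrite vx => x0; case/negP: xw.
      have -> : x = coord w j0 by apply: val_inj; rewrite x0 wj0.
      exact: mem_tnth.
    rewrite -(a p pj) => wp0.
    by move: pj; rewrite (coord_zero_unique wp0 wj0) eqxx.
  by exists (exist _ v vV); [apply/nbhdP | rewrite vx].
have card_w : #|[set x in val w]| = k.
  by rewrite cardsE (card_uniqP (valP w)) size_tuple.
by rewrite -(card_in_imset entry_inj) image cardsCs setCK card_ord card_w.
Qed.

(* A vertex adjacent to all of the neighbourhood would agree with two
   distinct neighbours a, b outside coordinates other than j0, forcing
   a_j0 = b_j0 and hence a = b. *)
Lemma nbhd_maximal : k.+2 <= n -> is_maximal_clique (@Gadj n k) (nbhd w).
Proof.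
move=> kn; split; first exact: nbhd_clique.
move=> S cliqueS sub; apply/eqP; rewrite eqEsubset sub andbT.
apply/subsetP => x xS; apply: contraT => xN.
have : 1 < #|nbhd w| by rewrite nbhd_card; lia.
case/card_gt1P => a [b [aN bN ab]].
have outside_j0 c :
    c \in nbhd w -> exists2 i, i != j0 & agree (val x) (val c) i.
  move=> cN; have xc : x != c by apply: contraNneq xN => ->.
  case/GadjP: (cliqueS x c xS (subsetP sub c cN) xc) => _ [i aci].
  exists i => //; apply: contraNneq xN => ij0; apply/nbhdP.
  move/nbhdP: cN => wc; rewrite ij0 in aci.
  exact: agree_trans wc (agree_sym aci).
have [i ij0 axa] := outside_j0 a aN; have [i' i'j0 axb] := outside_j0 b bN.
have xa : coord (val x) j0 = coord (val a) j0 by apply: axa; rewrite eq_sym.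
have xb : coord (val x) j0 = coord (val b) j0 by apply: axb; rewrite eq_sym.
move/nbhdP: aN => wa; move/nbhdP: bN => wb.
case/negP: ab; apply/eqP/val_inj/(agree_eq (agree_trans (agree_sym wa) wb)).
by rewrite -xa xb.
Qed.

End Neighbourhood.

Section Relabel.
Variables n k : nat.

(* x |-> x - 1, a bijection from the nonzero elements of 'I_n.+2 onto
   'I_n.+1, inverse to lift ord0 *)
Definition pred0 (x : 'I_n.+2) : 'I_n.+1 := odflt ord0 (unlift ord0 x).

Lemma pred0K : cancel (lift ord0) pred0.
Proof. by move=> y; rewrite /pred0 liftK. Qed.

Lemma lift_pred0 (x : 'I_n.+2) : val x != 0 -> lift ord0 (pred0 x) = x.
Proof.
move=> x_nz; have /unlift_some [y -> _] : ord0 != x by rewrite eq_sym.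
by rewrite pred0K.
Qed.

Lemma down_uniq (u : V1bar n.+2 k) : uniq (map pred0 (val (val u))).
Proof.
have u_nz x := @entry_nonzero _ _ (val u) x (valP u).
rewrite map_inj_in_uniq ?(valP (val u)) // => x y xu yu e.
by rewrite -(lift_pred0 (u_nz x xu)) e lift_pred0 ?u_nz.
Qed.

Definition down (u : V1bar n.+2 k) : Vtx n.+1 k :=
  exist (fun t : k.-tuple 'I_n.+1 => uniq t) (map_tuple pred0 (val (val u)))
    (down_uniq u).

Lemma lift_uniq (v : Vtx n.+1 k) : uniq (map (lift ord0) (val v)).
Proof. by rewrite map_inj_uniq ?(valP v) //; apply: lift_inj. Qed.

Definition liftV (v : Vtx n.+1 k) : Vtx n.+2 k :=
  exist (fun t : k.-tuple 'I_n.+2 => uniq t) (map_tuple (lift ord0) (val v))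
    (lift_uniq v).

Lemma liftV_notV1 (v : Vtx n.+1 k) : liftV v \notin V1 n.+2 k.
Proof. by apply/V1P => -[j]; rewrite /coord tnth_map. Qed.

Definition up (v : Vtx n.+1 k) : V1bar n.+2 k :=
  exist (fun u => u \notin V1 n.+2 k) (liftV v) (liftV_notV1 v).

Lemma downK : cancel down up.
Proof.
move=> u; apply/val_inj/val_inj/val_inj; rewrite /= -map_comp.
by apply: map_id_in => x xu; apply/lift_pred0/(entry_nonzero (valP u) xu).
Qed.

Lemma upK : cancel up down.
Proof. by move=> v; apply/val_inj/val_inj; apply: (mapK pred0K). Qed.

Lemma agree_down (u v : V1bar n.+2 k) j :
  agree (down u) (down v) j <-> agree (val u) (val v) j.
Proof.
split=> a p pj; last by rewrite /coord !tnth_map -!/(coord _ p) (a p pj).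
have := a p pj; rewrite /coord !tnth_map -!/(coord _ p) => e.
rewrite -(lift_pred0 (coord_nonzero p (valP u))) e.
exact: lift_pred0 (coord_nonzero p (valP v)).
Qed.

Lemma Gadj_iso_Padj : graph_iso (@Gadj n.+2 k) (@Padj k n.+1).
Proof.
exists down; split; first by exists up; [exact: downK | exact: upK].
move=> u v; apply/GadjP/PadjP => -[neq [j a]]; split.
- by rewrite (can_eq downK).
- by exists j; apply/agree_down.
- by rewrite -(can_eq downK).
- by exists j; apply/agree_down.
Qed.

End Relabel.

Theorem mainTheorem9 (n k : nat) (hk1 : 1 <= k) (hkn : k <= n - 2) :
  graph_iso (@Gadj n k) (@Padj k (n - 1)) /\
  forall w : Vtx n k, w \in V1 n k ->
    let N := [set u : V1bar n k | Xadj w (val u)] in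
    is_maximal_clique (@Gadj n k) N /\ #|N| = n - k.
Proof.
have [m n_eq] : exists m, n = m.+2 by exists (n - 2); lia.
subst n; split; first by rewrite subn1; exact: Gadj_iso_Padj.
move=> w /V1P [j0 wj0]; split; last exact: nbhd_card wj0.
by apply: nbhd_maximal wj0 _; lia.
Qed.
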